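(* Let $\mu$ satisfy Assumption A (see context), let $E$ be an atom of $\mu$, and let $(z_n)_{n\ge1}\subset\mathbb{C}^+$ be a sequence converging non-tangentially to $E$. Then $$\lim_{n}I_{\widehat\mu}(z_n)=\lim_n\frac{\int\frac{1}{|x-z_n|^2}\mu(dx)}{\big|\int\frac{1}{x-z_n}\mu(dx)\big|^2}-1=\frac{1}{\mu(\{E\})}-1.$$
   Context: Assumption A: $n_{\mathrm{ac}},n_{\mathrm{pp}},n^{\mathrm{out}}_{\mathrm{pp}}\ge1$ integers; $\mu$ is a compactly supported Borel probability measure on $\mathbb{R}$ whose singular part is supported on a finite set $\{x_1,\dots,x_{n_{\mathrm{pp}}}\}$, whose absolutely continuous part $\mu_{\mathrm{ac}}$ is supported on $n_{\mathrm{ac}}$ intervals $[E_j^-,E_j^+]$, with exactly $n^{\mathrm{out}}_{\mathrm{pp}}$ atoms outside $\mathrm{supp}(\mu_{\mathrm{ac}})$, no atom at the endpoints $E_j^\pm$, and density $\rho$ with $C_j^{-1}<\rho(x)/\big((x-E_j^-)^{t_j^-}(E_j^+-x)^{t_j^+}\big)<C_j$ a.e. on $[E_j^-,E_j^+]$ for some $-1<t_j^\pm<1$, $C_j\ge1$. $F_\mu=-1/m_\mu$ with $m_\mu(z)=\int\frac{1}{x-z}\mu(dx)$; $\widehat\mu$ is the finite Borel measure with $F_\mu(\omega)-\omega=-\int x\mu(dx)+\int\frac{1}{x-\omega}\widehat\mu(dx)$, $\omega\in\mathbb{C}^+$; $I_\nu(\omega)=\int\frac{1}{|x-\omega|^2}\nu(dx)$.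 A sequence $z_n\in\mathbb{C}^+$ converging to $E\in\mathbb{R}$ converges non-tangentially if $|(\mathrm{Re}\,z_n-E)/\mathrm{Im}\,z_n|\le C$ for some $C>0$ and all large $n$. *)

From HB Require Import structures.
From mathcomp Require Import all_boot all_order all_algebra.
From mathcomp Require Import all_classical all_reals all_analysis.
From mathcomp Require Import complex.
Import Order.TTheory GRing.Theory Num.Theory.
Import numFieldNormedType.Exports.

Set Implicit Arguments.
Unset Strict Implicit.
Unset Printing Implicit Defensive.

Local Open Scope ring_scope.
Local Open Scope classical_set_scope.

Section Defs.
Variable R : realType.

Definition rint (nu : {measure set R -> \bar R}) (f : R -> R) : R :=
  Rintegral nu setT f.

Definition cint (nu : {measure set R -> \bar R}) (f : R -> R[i]) : R[i] :=
  Complex (rint nu (fun x => complex.Re (f x))) (rint nu (fun x => complex.Im (f x))).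

Definition m_transform (nu : {measure set R -> \bar R}) (z : R[i]) : R[i] :=
  cint nu (fun x => (Complex x 0 - z)^-1).

Definition F_transform (nu : {measure set R -> \bar R}) (z : R[i]) : R[i] :=
  - (m_transform nu z)^-1.

Definition sqmod (w : R[i]) : R := complex.Re w ^+ 2 + complex.Im w ^+ 2.

Definition I_transform (nu : {measure set R -> \bar R}) (z : R[i]) : R :=
  rint nu (fun x => (sqmod (Complex x 0 - z))^-1).

Definition first_moment (nu : {measure set R -> \bar R}) : R := rint nu id.

Definition assumptionA (mu : probability R R) (nac npp nout : nat) : Prop :=
  [/\ (0 < nac)%N, (0 < npp)%N, (0 < nout)%N,
      (exists K : R, mu (~` `[- K, K]) = 0%E) &
      exists (xs : 'I_npp -> R) (Em Ep : 'I_nac -> R) (rho : R -> R),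
      [/\ [/\
          injective xs /\ (forall i, (0 < mu [set xs i])%E),
          (forall j, Em j < Ep j) /\
            (forall j k : 'I_nac, (j < k)%N -> Ep j < Em k) &
          [/\ measurable_fun setT rho, (forall x, 0 <= rho x) &
              (forall x, ~ (exists j, Em j <= x <= Ep j) -> rho x = 0)]],
          (forall A : set R, measurable A ->
             mu A = (\int[lebesgue_measure]_(x in A) (rho x)%:E
                     + mu (A `&` range xs))%E),
          (forall i j, xs i != Em j /\ xs i != Ep j),
          #|[set i : 'I_npp | ~~ [exists j : 'I_nac, Em j <= xs i <= Ep j]]| = nout
        &
          (forall j, exists (tm tp C : R),
             [/\ -1 < tm < 1, -1 < tp < 1, 1 <= C &
                 {ae lebesgue_measure, forall x : R, Em j < x < Ep j ->
                    C^-1 < rho x / (powR (x - Em j) tm * powR (Ep j - x) tp) < C}])]].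

Definition nontangential_cvg (z : nat -> R[i]) (E : R) : Prop :=
  [/\ (fun n => complex.Re (z n)) @ \oo --> E,
      (fun n => complex.Im (z n)) @ \oo --> (0 : R) &
      exists C : R, 0 < C /\
        \forall n \near \oo, `|(complex.Re (z n) - E) / complex.Im (z n)| <= C].

End Defs.

From HB Require Import structures.
From mathcomp Require Import all_boot all_order all_algebra.
From mathcomp Require Import all_classical all_reals all_analysis.
From mathcomp Require Import complex measurable_realfun.
From mathcomp Require Import ring lra.
Import Order.TTheory GRing.Theory Num.Theory.
Import numFieldNormedType.Exports.

Set Implicit Arguments.
Unset Strict Implicit.
Unset Printing Implicit Defensive.
Local Open Scope ring_scope.
Local Open Scope classical_set_scope.

(* Taking imaginary parts in the Nevanlinna relation gives
   I_muhat(w) = I_mu(w) / |m_mu(w)|^2 - 1, so only the second limit matters.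
   Multiply numerator and denominator by d = |z - E|^2: d I_mu(z) and the
   real and imaginary parts of (E - z) m_mu(z) are integrals of kernels
   (k1 + k2 (x - Re z)) / |x - z|^2, which stay uniformly bounded when z
   approaches E non-tangentially and converge pointwise to multiples of the
   indicator of {E}.  Dominated convergence gives d I_mu(z) -> mu{E} and
   d |m_mu(z)|^2 -> mu{E}^2, whence the limit 1/mu{E} - 1.  Nothing of
   Assumption A is needed beyond finiteness of mu. *)

Section point_mass_limit.
Variables (R : realType) (nu : {finite_measure set R -> \bar R}).

Lemma finite_measure_integrable_bounded (f : R -> R) (M : R) :
  measurable_fun setT f -> (forall x, `|f x| <= M) ->
  nu.-integrable setT (EFin \o f).
Proof.
move=> mf fM; apply: measurable_bounded_integrable => //.
  by rewrite ltey_eq fin_num_measure.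
exists M; split; first exact: num_real.
by move=> y My x _; exact: le_trans (fM x) (ltW My).
Qed.

Lemma cvg_rint_to_atom (f_ : nat -> R -> R) (E c M : R) :
  (forall n, measurable_fun setT (f_ n)) ->
  (\forall n \near \oo, forall x, `|f_ n x| <= M) ->
  f_ ^~ E @ \oo --> c ->
  (forall x, x != E -> f_ ^~ x @ \oo --> 0) ->
  (fun n => rint nu (f_ n)) @ \oo --> c * fine (nu [set E]).
Proof.
move=> mf [N _ f_M] f_E f_x; rewrite -(cvg_shiftn N).
pose g_ n x := (f_ (n + N)%N x)%:E.
pose g x := (c * \1_[set E] x)%:E.
have g_g x : setT x -> g_ ^~ x @ \oo --> g x.
  move=> _; apply: cvg_EFin; first exact: nearW.
  rewrite /g /indic; have [->|xE] := eqVneq x E.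
    by rewrite mem_set// mulr1 (cvg_shiftn N (f_ ^~ E)).
  rewrite memNset ?mulr0; last by move=> /eqP; rewrite (negbTE xE).
  by rewrite (cvg_shiftn N (f_ ^~ x)); exact: f_x.
have int_g : (\int[nu]_(x in setT) g x = (c * fine (nu [set E]))%:E)%E.
  rewrite /g; under eq_integral do rewrite EFinM.
  rewrite integralZl//; last exact: integrable_indic.
  by rewrite integral_indic// setIT EFinM fineK// fin_num_measure.
have [|||||_ _] := @dominated_convergence _ _ _ nu _ measurableT g_ g (EFin \o cst M).
- by move=> n; apply/measurable_EFinP.
- by apply/measurable_EFinP; exact: measurable_funM.
- exact: aeW.
- exact: finite_measure_integrable_cst.
- by apply: aeW => x n _; rewrite lee_fin; apply: f_M => /=; exact: leq_addl.
by rewrite int_g => /fine_cvgP[].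
Qed.

End point_mass_limit.

Section kernel.
Variable R : realType.
Implicit Types (w : R[i]) (x : R).

Definition inv_sqdist w x := ((x - complex.Re w) ^+ 2 + complex.Im w ^+ 2)^-1.

Lemma inv_sqmod_sub w x : (sqmod (Complex x 0 - w))^-1 = inv_sqdist w x.
Proof. by case: w => a b; rewrite /inv_sqdist /sqmod /= sub0r sqrrN. Qed.

Lemma Re_inv_sub w x :
  complex.Re ((Complex x 0 - w)^-1) = (x - complex.Re w) * inv_sqdist w x.
Proof. by case: w => a b; rewrite /inv_sqdist /= sub0r sqrrN. Qed.

Lemma Im_inv_sub w x :
  complex.Im ((Complex x 0 - w)^-1) = complex.Im w * inv_sqdist w x.
Proof. by case: w => a b; rewrite /inv_sqdist /= sub0r sqrrN mulNr opprK. Qed.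

Lemma Im_opp_inv w : complex.Im (- w^-1) = complex.Im w / sqmod w.
Proof. by case: w => a b; rewrite /sqmod /= opprK. Qed.

Lemma continuous_inv_sqdist w : complex.Im w != 0 -> continuous (inv_sqdist w).
Proof.
move=> w0 x; apply: cvgV.
  by rewrite paddr_eq0 ?sqr_ge0// !sqrf_eq0 negb_and w0 orbT.
apply: cvgD; last exact: cvg_cst.
by rewrite expr2; apply: cvgM; apply: cvgB; exact: cvg_cst || exact: cvg_id.
Qed.

Lemma measurable_inv_sqdist w : 0 < complex.Im w -> measurable_fun setT (inv_sqdist w).
Proof.
by move=> w0; apply: continuous_measurable_fun; apply: continuous_inv_sqdist; rewrite gt_eqF.
Qed.

Lemma norm_inv_sqdist_le w x : 0 < complex.Im w ->
  `|inv_sqdist w x| <= (complex.Im w ^+ 2)^-1.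
Proof.
move=> w0; have e2 : 0 < complex.Im w ^+ 2 by rewrite exprn_gt0.
rewrite /inv_sqdist ger0_norm; last by rewrite invr_ge0 addr_ge0 // sqr_ge0.
by rewrite lef_pV2 ?posrE ?lerDr ?sqr_ge0 // ltr_wpDl // sqr_ge0.
Qed.

Lemma norm_mul_inv_sqdist_le w x : 0 < complex.Im w ->
  `|(x - complex.Re w) * inv_sqdist w x| <= (complex.Im w)^-1.
Proof.
rewrite /inv_sqdist; set t := x - _; set e := complex.Im w => e0.
have q0 : 0 < t ^+ 2 + e ^+ 2 by rewrite ltr_wpDl ?sqr_ge0 ?exprn_gt0.
rewrite normrM [`|_^-1|]ger0_norm; last by rewrite invr_ge0 ltW.
rewrite ler_pdivrMr // mulrC ler_pdivlMr //.
have : `|t| ^+ 2 = t ^+ 2 by rewrite real_normK // num_real.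
have := normr_ge0 t; nra.
Qed.

Definition lin_kernel w k1 k2 x := (k1 + k2 * (x - complex.Re w)) * inv_sqdist w x.

Lemma measurable_lin_kernel w k1 k2 : 0 < complex.Im w ->
  measurable_fun setT (lin_kernel w k1 k2).
Proof.
move=> w0; apply: measurable_funM; last exact: measurable_inv_sqdist.
by apply: measurable_funD => //; apply: measurable_funM => //; exact: measurable_funB.
Qed.

Lemma norm_lin_kernel_le w k1 k2 A B x : 0 < complex.Im w ->
  `|k1| <= A * complex.Im w ^+ 2 -> `|k2| <= B * complex.Im w ->
  `|lin_kernel w k1 k2 x| <= A + B.
Proof.
move=> w0 k1A k2B; rewrite /lin_kernel mulrDl -mulrA.
apply: le_trans (ler_normD _ _) _; rewrite !normrM; apply: lerD.
  rewrite -[A](mulfK (lt0r_neq0 (exprn_gt0 2 w0))).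
  by apply: ler_pM => //; exact: norm_inv_sqdist_le.
rewrite -[B](mulfK (lt0r_neq0 w0)) -normrM.
by apply: ler_pM => //; exact: norm_mul_inv_sqdist_le.
Qed.

End kernel.

Section transforms.
Variables (R : realType) (nu : {finite_measure set R -> \bar R}).
Implicit Types (w : R[i]).

Lemma integrable_inv_sqdist w : 0 < complex.Im w ->
  nu.-integrable setT (EFin \o inv_sqdist w).
Proof.
move=> w0; apply: finite_measure_integrable_bounded (measurable_inv_sqdist w0) _.
by move=> x; exact: norm_inv_sqdist_le.
Qed.

Lemma integrable_lin_kernel w k1 k2 : 0 < complex.Im w ->
  nu.-integrable setT (EFin \o lin_kernel w k1 k2).
Proof.
move=> w0; apply: finite_measure_integrable_bounded (measurable_lin_kernel k1 k2 w0) _.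
move=> x; apply: (norm_lin_kernel_le
  (A := `|k1| / complex.Im w ^+ 2) (B := `|k2| / complex.Im w)) => //.
  by rewrite divfK // lt0r_neq0 // exprn_gt0.
by rewrite divfK // lt0r_neq0.
Qed.

Lemma I_transformE w : I_transform nu w = rint nu (inv_sqdist w).
Proof. by congr rint; apply/funext => x; rewrite inv_sqmod_sub. Qed.

Lemma Re_m_transform w : complex.Re (m_transform nu w) =
  rint nu (fun x => (x - complex.Re w) * inv_sqdist w x).
Proof. by congr rint; apply/funext => x; rewrite Re_inv_sub. Qed.

Lemma Im_m_transform w : 0 < complex.Im w ->
  complex.Im (m_transform nu w) = complex.Im w * I_transform nu w.
Proof.
move=> w0; rewrite I_transformE /rint -RintegralZl //; last exact: integrable_inv_sqdist.
by congr Rintegral; apply/funext => x; rewrite Im_inv_sub.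
Qed.

Lemma rint_lin_kernel w k1 k2 : 0 < complex.Im w ->
  rint nu (lin_kernel w k1 k2) =
  k1 * I_transform nu w + k2 * complex.Re (m_transform nu w).
Proof.
move=> w0; have int_mul k f : nu.-integrable setT (EFin \o f) ->
    nu.-integrable setT (EFin \o (fun x => k * f x)).
  move=> f_int; rewrite (_ : _ \o _ = fun x => k%:E * (EFin \o f) x)%E.
    exact: integrableZl.
  by apply/funext => x; rewrite /= EFinM.
have int_U : nu.-integrable setT
    (EFin \o (fun x => (x - complex.Re w) * inv_sqdist w x)).
  rewrite (_ : (fun x => _) = lin_kernel w 0 1); last first.
    by apply/funext => x; rewrite /lin_kernel add0r mul1r.
  exact: integrable_lin_kernel.
rewrite I_transformE Re_m_transform /rint.
rewrite (_ : lin_kernel w k1 k2 = fun x =>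
  k1 * inv_sqdist w x + k2 * ((x - complex.Re w) * inv_sqdist w x)); last first.
  by apply/funext => x; rewrite /lin_kernel mulrDl mulrA.
rewrite RintegralD //; last 2 first.
- exact/int_mul/integrable_inv_sqdist.
- exact: int_mul.
by rewrite !RintegralZl //; exact: integrable_inv_sqdist.
Qed.

End transforms.

Lemma I_transform_nevanlinna (R : realType)
    (mu muhat : {finite_measure set R -> \bar R}) (c : R) (w : R[i]) :
  0 < complex.Im w ->
  F_transform mu w - w = Complex c 0 + m_transform muhat w ->
  I_transform muhat w = I_transform mu w / sqmod (m_transform mu w) - 1.
Proof.
move=> w0; rewrite /F_transform.
have := Im_m_transform mu w0; have := Im_m_transform muhat w0.
case: (m_transform mu w) (m_transform muhat w) => [u v] [u' v'] /= -> ->.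
case: w w0 => a b /= b0 /(congr1 (@complex.Im R)) /=.
rewrite /sqmod /= opprK add0r -mulrA -[b in _ - b]mulr1 -mulrBr.
by move=> /(mulfI (lt0r_neq0 b0)) ->.
Qed.

Lemma nontangential_cvg_bound (R : realType) (z : nat -> R[i]) (E : R) :
  (forall n, 0 < complex.Im (z n)) -> nontangential_cvg z E ->
  exists C, \forall n \near \oo, `|complex.Re (z n) - E| <= C * complex.Im (z n).
Proof.
move=> Im_z_gt0 [_ _ [C [_ z_C]]]; exists C; apply: filterS z_C => n.
by rewrite normrM normfV (gtr0_norm (Im_z_gt0 n)) ler_pdivrMr.
Qed.

Section nontangential_limit.
Variables (R : realType) (nu : {finite_measure set R -> \bar R}).
Variables (z : nat -> R[i]) (E C : R).
Hypothesis Im_z_gt0 : forall n, 0 < complex.Im (z n).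
Hypothesis Re_z_cvg : (fun n => complex.Re (z n)) @ \oo --> E.
Hypothesis Im_z_cvg : (fun n => complex.Im (z n)) @ \oo --> 0.
Hypothesis z_bound :
  \forall n \near \oo, `|complex.Re (z n) - E| <= C * complex.Im (z n).

Let a n := complex.Re (z n) - E.
Let e n := complex.Im (z n).
Let d n := a n ^+ 2 + e n ^+ 2.
Let I n := I_transform nu (z n).
Let U n := complex.Re (m_transform nu (z n)).
Let p := fine (nu [set E]).

Let d_gt0 n : 0 < d n.
Proof. by rewrite /d ltr_wpDl ?sqr_ge0 ?exprn_gt0 ?Im_z_gt0. Qed.

Let a_cvg0 : a @ \oo --> 0.
Proof. by rewrite -(subrr E); apply: cvgB => //; exact: cvg_cst. Qed.

Let mul_cvg0 (u v : nat -> R) :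
  u @ \oo --> 0 -> v @ \oo --> 0 -> (fun n => u n * v n) @ \oo --> 0.
Proof. by move=> u0 v0; rewrite -(mulr0 0); apply: cvgM. Qed.

Lemma cvg_transform_combination (k1 k2 : nat -> R) (c A B : R) :
  (\forall n \near \oo, `|k1 n| <= A * e n ^+ 2 /\ `|k2 n| <= B * e n) ->
  k1 @ \oo --> 0 -> k2 @ \oo --> 0 ->
  (forall n, k1 n - k2 n * a n = c * d n) ->
  (fun n => k1 n * I n + k2 n * U n) @ \oo --> c * p.
Proof.
move=> k_bound k1_cvg k2_cvg k_at_E.
under eq_fun do rewrite -rint_lin_kernel ?Im_z_gt0//.
apply: (cvg_rint_to_atom _ (M := A + B)).
- by move=> n; exact: measurable_lin_kernel.
- by apply: filterS k_bound => n [k1A k2B] x; exact: norm_lin_kernel_le.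
- apply: cvg_near_cst; apply: nearW => n.
  rewrite /lin_kernel /inv_sqdist -opprB -/(a n) -/(e n) sqrrN -/(d n) mulrN.
  by rewrite k_at_E mulfK // lt0r_neq0 // d_gt0.
move=> x xE; rewrite -(mul0r ((x - E) ^+ 2 + 0 ^+ 2)^-1); apply: cvgM.
  rewrite -[0](addr0 0) -{2}(mul0r (x - E)); apply: cvgD => //; apply: cvgM => //.
  by apply: cvgB => //; exact: cvg_cst.
apply: cvgV; first by rewrite expr0n addr0 sqrf_eq0 subr_eq0.
apply: cvgD; rewrite !expr2; apply: cvgM => //; apply: cvgB => //; exact: cvg_cst.
Qed.

Let dI_cvg : (fun n => d n * I n + 0 * U n) @ \oo --> 1 * p.
Proof.
apply: (cvg_transform_combination (A := C ^+ 2 + 1) (B := 0)).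
- apply: filterS z_bound => n a_le; rewrite normr0 mul0r; split => //.
  rewrite ger0_norm ?(ltW (d_gt0 n)) // /d mulrDl mul1r lerD2r.
  have : `|a n| ^+ 2 = a n ^+ 2 by rewrite real_normK ?num_real.
  have := normr_ge0 (a n); rewrite /e; nra.
- rewrite -[0](addr0 0); apply: cvgD.
    exact: mul_cvg0 a_cvg0 a_cvg0.
  exact: mul_cvg0 Im_z_cvg Im_z_cvg.
- exact: cvg_cst.
- by move=> n; rewrite mul0r subr0 mul1r.
Qed.

Let K1_cvg : (fun n => e n ^+ 2 * I n + (- a n) * U n) @ \oo --> 1 * p.
Proof.
apply: (cvg_transform_combination (A := 1) (B := C)).
- by apply: filterS z_bound => n a_le; rewrite normrN mul1r ger0_norm ?sqr_ge0.
- exact: mul_cvg0 Im_z_cvg Im_z_cvg.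
- by rewrite -oppr0; apply: cvgN; exact: a_cvg0.
- by move=> n; rewrite mulNr opprK mul1r addrC.
Qed.

Let K2_cvg : (fun n => a n * e n * I n + e n * U n) @ \oo --> 0 * p.
Proof.
apply: (cvg_transform_combination (A := C) (B := 1)).
- apply: filterS z_bound => n a_le.
  rewrite mul1r normrM (gtr0_norm (Im_z_gt0 n)) expr2 mulrA; split => //.
  by apply: ler_wpM2r => //; exact/ltW/Im_z_gt0.
- exact: mul_cvg0 a_cvg0 Im_z_cvg.
- exact: Im_z_cvg.
- by move=> n; rewrite mul0r [e n * _]mulrC subrr.
Qed.

(* The two squared terms are the real part and minus the imaginary part of
   [(E - z n) * m_transform nu (z n)]. *)
Let sqmod_m_transform n : sqmod (m_transform nu (z n)) =
  ((e n ^+ 2 * I n + (- a n) * U n) ^+ 2 + (a n * e n * I n + e n * U n) ^+ 2)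
  / d n.
Proof.
rewrite /sqmod Im_m_transform ?Im_z_gt0 // -/(U n) -/(I n).
by apply: (canRL (mulfK (lt0r_neq0 (d_gt0 n)))); rewrite /d; ring.
Qed.

Lemma cvg_I_div_sqmod : (0 < nu [set E])%E ->
  (fun n => I_transform nu (z n) / sqmod (m_transform nu (z n))) @ \oo --> p^-1.
Proof.
move=> atom_E; have p_gt0 : 0 < p.
  by rewrite fine_gt0 // atom_E ltey_eq fin_num_measure.
have -> : (fun n => I_transform nu (z n) / sqmod (m_transform nu (z n))) = fun n =>
    (d n * I n + 0 * U n) /
    ((e n ^+ 2 * I n + (- a n) * U n) ^+ 2 + (a n * e n * I n + e n * U n) ^+ 2).
  by apply/funext => n; rewrite sqmod_m_transform mul0r addr0 invf_div mulrCA mulrA.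
have -> : p^-1 = 1 * p / ((1 * p) ^+ 2 + (0 * p) ^+ 2) by field; rewrite gt_eqF.
apply: cvgM dI_cvg (cvgV _ (cvgD (cvgM K1_cvg K1_cvg) (cvgM K2_cvg K2_cvg))).
by rewrite !mul0r addr0 mul1r mulf_neq0 // gt_eqF.
Qed.

End nontangential_limit.

Theorem lemma3p11 (R : realType) (nac npp nout : nat)
  (mu : probability R R) (muhat : {finite_measure set R -> \bar R})
  (E : R) (z : nat -> R[i]) :
  assumptionA mu nac npp nout ->
  (* muhat is the measure in the Nevanlinna representation of F_mu *)
  (forall w : R[i], 0 < complex.Im w ->
     F_transform mu w - w = Complex (- first_moment mu) 0 + m_transform muhat w) ->
  (* E is an atom of mu *)
  (0 < mu [set E])%E ->
  (forall n, 0 < complex.Im (z n)) ->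
  nontangential_cvg z E ->
  (fun n => I_transform muhat (z n)) @ \oo --> (fine (mu [set E]))^-1 - 1 /\
  (fun n => I_transform mu (z n) / sqmod (m_transform mu (z n)) - 1) @ \oo
     --> (fine (mu [set E]))^-1 - 1.
Proof.
move=> _ nevanlinna atom_E Im_z_gt0 z_cvg.
have [C z_bound] := nontangential_cvg_bound Im_z_gt0 z_cvg.
have [Re_z_cvg Im_z_cvg _] := z_cvg.
have lim : (fun n => I_transform mu (z n) / sqmod (m_transform mu (z n)) - 1) @ \oo
    --> (fine (mu [set E]))^-1 - 1.
  exact: cvgB (cvg_I_div_sqmod Im_z_gt0 Re_z_cvg Im_z_cvg z_bound atom_E) (cvg_cst _).
have hat_eq n : I_transform muhat (z n) =
    I_transform mu (z n) / sqmod (m_transform mu (z n)) - 1.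
  exact: I_transform_nevanlinna (Im_z_gt0 n) (nevanlinna _ (Im_z_gt0 n)).
by rewrite (eq_cvg _ _ hat_eq).
Qed.
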